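(* Let $x\in\mathbb{R}^n$, $k\ge1$ and $p\in(0,1]$. Suppose we subsample $x$ with probability $p$, i.e. each coordinate $i\in[n]$ is independently kept with probability $p$ and otherwise set to zero, and let $y$ be the resulting subsampled vector. Then with failure probability $e^{-\Omega(k)}$, $$\|y_{-2k}\|_2\le\sqrt{2p}\,\|x_{-k/p}\|_2 .$$
   Context: For a vector $v$ and $s\ge 0$, $v_{-s}$ denotes $v$ with its $s$ largest coordinates in absolute value zeroed out. *)

From HB Require Import structures.
From mathcomp Require Import all_boot all_order all_algebra.
From mathcomp Require Import reals.
From mathcomp Require Import sequences exp.
Set Implicit Arguments. Unset Strict Implicit. Unset Printing Implicit Defensive.
Import Order.TTheory GRing.Theory Num.Theory.
Local Open Scope ring_scope.

Section Defs.
Variable R : realType.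

Definition top_idx (n : nat) (x : 'rV[R]_n) (s : nat) : seq 'I_n :=
  take s (sort (fun i j : 'I_n => `|x ord0 j| <= `|x ord0 i|) (enum 'I_n)).

Definition tailv (n : nat) (x : 'rV[R]_n) (s : nat) : 'rV[R]_n :=
  \row_i (if i \in top_idx x s then 0 else x ord0 i).

Definition l2norm (n : nat) (x : 'rV[R]_n) : R :=
  Num.sqrt (\sum_i (x ord0 i) ^+ 2).

Definition subsample (n : nat) (x : 'rV[R]_n) (S : {set 'I_n}) : 'rV[R]_n :=
  \row_i (if i \in S then x ord0 i else 0).

(* Probability that the set of kept coordinates is exactly S, when each
   coordinate is kept independently with probability p. *)
Definition keep_prob (n : nat) (p : R) (S : {set 'I_n}) : R :=
  p ^+ #|S| * (1 - p) ^+ (n - #|S|).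

Definition subsample_prob (n : nat) (p : R) (E : pred {set 'I_n}) : R :=
  \sum_(S in {set 'I_n} | E S) keep_prob p S.

End Defs.

From mathcomp Require Import all_boot all_order all_algebra.
From mathcomp Require Import reals.
From mathcomp Require Import sequences exp.
From mathcomp Require Import ring lra.
Import Order.TTheory GRing.Theory Num.Theory.
Local Open Scope ring_scope.
Set Implicit Arguments. Unset Strict Implicit.

(* Let T = floor(k/p), M = floor(k/(4p)), let H be the T + M largest coordinates
   of x and N = |x_{-T}|^2.  If at most 2k coordinates of H are kept and the
   kept coordinates outside H carry mass at most 2pN, then zeroing the kept
   coordinates of H shows |y_{-2k}|^2 <= 2pN.  Both bad events are Chernoff
   bounds for sums of independent [0, B]-valued variables: E|S :&: H| <=
   p(T + M) <= 5k/4, and every coordinate outside H has x_i^2 <= N/M, since the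
   M coordinates ranked T+1, ..., T+M dominate it, while pM >= k/8. *)

Lemma expR_le1D_small (R : realType) (a : R) :
  0 <= a -> a <= 1/4 -> expR a <= 1 + 4/3 * a.
Proof.
move=> a_ge0 a_le; have ea_gt0 := expR_gt0 a.
have : expR a * (1 - a) <= 1.
  by rewrite -ler_pdivlMl // mulr1 -expRN expR_ge1Dx.
nra.
Qed.

Section Subsampling.
Variables (R : realType) (n : nat) (p : R).
Hypotheses (p_ge0 : 0 <= p) (p_le1 : p <= 1).

Lemma keep_probE (S : {set 'I_n}) :
  keep_prob p S = \prod_i (if i \in S then p else 1 - p).
Proof.
rewrite /keep_prob (bigID (mem S)) /=.
rewrite (eq_bigr (fun _ => p)) => [|i ->//].
rewrite [X in _ = _ * X](eq_bigr (fun _ => 1 - p)) => [|i /negbTE ->//].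
rewrite !prodr_const; congr (_ * _ ^+ _).
by rewrite -[n in (n - _)%N]card_ord -(cardC (mem S)) addKn.
Qed.

Lemma keep_prob_ge0 (S : {set 'I_n}) : 0 <= keep_prob p S.
Proof. by rewrite /keep_prob mulr_ge0 // exprn_ge0 // subr_ge0. Qed.

Lemma sum_keep_prob_prod (g : 'I_n -> R) :
  \sum_(S : {set 'I_n}) keep_prob p S * \prod_(i in S) g i
  = \prod_i (1 - p + p * g i).
Proof.
transitivity (\prod_i \sum_(b : bool) (if b then p * g i else 1 - p)); last first.
  by apply: eq_bigr => i _; rewrite big_bool /= addrC.
rewrite bigA_distr_bigA (reindex (fun S : {set 'I_n} => [ffun i => i \in S])) /=.
  apply: eq_bigr => S _; rewrite keep_probE [X in _ * X]big_mkcond -big_split /=.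
  by apply: eq_bigr => i _; rewrite ffunE; case: (i \in S); rewrite ?mulr1.
exists (fun f : {ffun 'I_n -> bool} => [set i | f i]) => [S _ | f _].
  by apply/setP => i; rewrite inE ffunE.
by apply/ffunP => i; rewrite ffunE inE.
Qed.

Lemma subsample_probE (E : pred {set 'I_n}) :
  subsample_prob p E = \sum_S (if E S then keep_prob p S else 0).
Proof. by rewrite /subsample_prob big_mkcond. Qed.

Lemma subsample_prob_le1 (E : pred {set 'I_n}) : subsample_prob p E <= 1.
Proof.
have <- : \sum_(S : {set 'I_n}) keep_prob p S = 1.
  have : \sum_(S : {set 'I_n}) keep_prob p S * \prod_(i in S) (1 : R) = 1.
    by rewrite sum_keep_prob_prod; apply: big1 => i _; rewrite mulr1 subrK.
  by under eq_bigr do rewrite big1_eq mulr1.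
rewrite subsample_probE; apply: ler_sum => S _.
by case: (E S); rewrite ?keep_prob_ge0.
Qed.

Lemma subsample_prob_eq0 (E : pred {set 'I_n}) :
  (forall S, ~~ E S) -> subsample_prob p E = 0.
Proof. by move=> E0; rewrite subsample_probE big1 // => S _; rewrite (negbTE (E0 S)). Qed.

Lemma subsample_probU (E E1 E2 : pred {set 'I_n}) :
  (forall S, E S -> E1 S || E2 S) ->
  subsample_prob p E <= subsample_prob p E1 + subsample_prob p E2.
Proof.
move=> EU; rewrite !subsample_probE -big_split; apply: ler_sum => S _ /=.
have := keep_prob_ge0 S.
case: (E S) (EU S) => [/(_ isT)|_]; case: (E1 S); case: (E2 S) => //=; lra.
Qed.

Lemma subsample_prob_markov (E : pred {set 'I_n}) (F : {set 'I_n} -> R) :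
  (forall S, 0 <= F S) -> (forall S, E S -> 1 <= F S) ->
  subsample_prob p E <= \sum_S keep_prob p S * F S.
Proof.
move=> F_ge0 EF; rewrite subsample_probE; apply: ler_sum => S _.
have := keep_prob_ge0 S; have := F_ge0 S.
case ES: (E S); last by move=> *; rewrite mulr_ge0.
by have := EF S ES; nra.
Qed.

Lemma mgf_factor_le (a : R) :
  0 <= a -> a <= 1 / 4 -> 0 <= 1 - p + p * expR a <= expR (p * (4 / 3 * a)).
Proof.
move=> a_ge0 a_le; rewrite addr_ge0 ?subr_ge0 ?mulr_ge0 ?expR_ge0 //=.
have := ler_wpM2l p_ge0 (expR_le1D_small a_ge0 a_le).
have := expR_ge1Dx (p * (4 / 3 * a)); lra.
Qed.

Lemma subsample_chernoff (E : pred {set 'I_n}) (w : 'I_n -> R) (B t : R) :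
  0 < B -> (forall i, 0 <= w i <= B) ->
  (forall S, E S -> t < \sum_(i in S) w i) ->
  subsample_prob p E <= expR ((p * (\sum_i w i) / 3 - t / 4) / B).
Proof.
move=> B_gt0 w_bd Ew.
(* Markov for exp((sum_S w - t) / 4B); its expectation factors over the coordinates. *)
pose F (S : {set 'I_n}) := expR (\sum_(i in S) (w i / (4 * B)) - t / (4 * B)).
apply: le_trans (subsample_prob_markov (F := F) _ _) _ => [S|S /Ew ltS|].
- exact: expR_ge0.
- rewrite -expR0 ler_expR -mulr_suml subr_ge0.
  by apply: ler_wpM2r (ltW ltS); rewrite invr_ge0; lra.
under eq_bigr do rewrite /F expRD expR_sum mulrA.
rewrite -[leLHS]mulr_suml sum_keep_prob_prod.
have -> : (p * (\sum_i w i) / 3 - t / 4) / B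
          = \sum_i (p * w i / (3 * B)) - t / (4 * B).
  by rewrite -big_distrl -big_distrr /=; field; exact: lt0r_neq0.
rewrite expRD ler_pM2r ?expR_gt0 // expR_sum; apply: ler_prod => i _.
have /andP [w_ge0 w_le] := w_bd i.
have -> : p * w i / (3 * B) = p * (4 / 3 * (w i / (4 * B))).
  by field; exact: lt0r_neq0.
apply: mgf_factor_le; first by rewrite divr_ge0 ?mulr_ge0 //; lra.
by rewrite ler_pdivrMr ?mulr_gt0 //; lra.
Qed.

End Subsampling.

Lemma ler_sum_subpred (R : numDomainType) (I : finType) (P Q : pred I)
    (f : I -> R) :
  (forall i, 0 <= f i) -> (forall i, P i -> Q i) ->
  \sum_(i | P i) f i <= \sum_(i | Q i) f i.
Proof.
move=> f_ge0 PQ; rewrite [leLHS]big_mkcond [leRHS]big_mkcond /=.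
apply: ler_sum => i _; case Pi: (P i); first by rewrite PQ.
by case: (Q i).
Qed.

Lemma ler_sum_dominated (R : numDomainType) (T : finType) (f : T -> R)
    (A B : {set T}) :
  (#|A| <= #|B|)%N -> (forall b, b \in B -> 0 <= f b) ->
  {in A & B, forall a b, f a <= f b} ->
  \sum_(a in A) f a <= \sum_(b in B) f b.
Proof.
move=> AB f_ge0 fAB; have [B0|/set0Pn [b0 b0B]] := eqVneq B set0.
  by move: AB; rewrite B0 cards0 leqn0 cards_eq0 => /eqP ->; rewrite !big_set0.
have B_gt0 : (0 < #|B|)%N by apply/card_gt0P; exists b0.
rewrite -(ler_pM2l (_ : 0 < #|B|%:R :> R)) ?ltr0n //.
have -> : #|B|%:R * \sum_(a in A) f a = \sum_(a in A) \sum_(b in B) f a.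
  by rewrite mulr_sumr; apply: eq_bigr => a _; rewrite sumr_const mulr_natl.
apply: (@le_trans _ _ (#|A|%:R * \sum_(b in B) f b)).
  rewrite mulr_natl -sumr_const; apply: ler_sum => a aA.
  by apply: ler_sum => b bB; apply: fAB.
by apply: ler_wpM2r; [apply: sumr_ge0 | rewrite ler_nat].
Qed.

Lemma ler_sum_notin (R : numDomainType) (T : finType) (f : T -> R)
    (A B : {set T}) :
  (#|A| <= #|B|)%N -> (forall b, 0 <= f b) ->
  {in A :\: B & B :\: A, forall a b, f a <= f b} ->
  \sum_(i | i \notin B) f i <= \sum_(i | i \notin A) f i.
Proof.
move=> AB f_ge0 fAB.
have splitC (C D : {set T}) : \sum_(i | i \notin C) f i
    = \sum_(i | (i \notin C) && (i \notin D)) f i + \sum_(i in D :\: C) f i.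
  rewrite (bigID (mem D)) addrC; congr (_ + _).
  by apply: eq_bigl => i; rewrite !inE andbC.
rewrite (splitC B A) (splitC A B) [X in _ <= X + _](eq_bigl _ _ (fun i => andbC _ _)).
rewrite lerD2l; apply: ler_sum_dominated => [|b _|]; rewrite ?f_ge0 //.
by rewrite !cardsD setIC leq_sub2r.
Qed.

Section TopCoordinates.
Variables (R : realType) (n : nat) (y : 'rV[R]_n).

Definition abs_sorted : seq 'I_n :=
  sort (fun i j : 'I_n => `|y ord0 j| <= `|y ord0 i|) (enum 'I_n).

Lemma top_idxE m : top_idx y m = take m abs_sorted.
Proof. by []. Qed.

Lemma abs_sorted_uniq : uniq abs_sorted.
Proof. by rewrite sort_uniq enum_uniq. Qed.

Lemma mem_abs_sorted i : i \in abs_sorted.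
Proof. by rewrite mem_sort mem_enum. Qed.

Lemma size_abs_sorted : size abs_sorted = n.
Proof. by rewrite size_sort size_enum_ord. Qed.

Lemma card_top_idx m : #|top_idx y m| = minn m n.
Proof.
move/card_uniqP: (take_uniq m abs_sorted_uniq) => ->.
by rewrite size_take_min size_abs_sorted.
Qed.

Lemma top_idx_full m : (n <= m)%N -> top_idx y m = abs_sorted.
Proof. by move=> nm; rewrite top_idxE take_oversize ?size_abs_sorted. Qed.

Lemma sqr_le_top_idx m i j :
  i \in top_idx y m -> j \notin top_idx y m -> y ord0 j ^+ 2 <= y ord0 i ^+ 2.
Proof.
move=> i_top j_top.
rewrite -[y _ j ^+ 2]real_normK ?num_real // -[y _ i ^+ 2]real_normK ?num_real //.
rewrite ler_sqr ?nnegrE //.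
have : j \in top_idx y m ++ drop m abs_sorted.
  by rewrite top_idxE cat_take_drop mem_abs_sorted.
rewrite mem_cat (negbTE j_top) /= => j_drop.
have : sorted (fun i j : 'I_n => `|y ord0 j| <= `|y ord0 i|) abs_sorted.
  by apply: sort_sorted => a b; apply: le_total.
rewrite sorted_pairwise => [|a b c ba cb]; last exact: le_trans cb ba.
rewrite -(cat_take_drop m abs_sorted) pairwise_cat => /and3P [/allrelP top_drop _ _].
exact: top_drop.
Qed.

Lemma tailv_sqr_sum m :
  \sum_i tailv y m ord0 i ^+ 2 = \sum_(i | i \notin top_idx y m) y ord0 i ^+ 2.
Proof.
rewrite [RHS]big_mkcond; apply: eq_bigr => i _; rewrite mxE.
by case: (i \in top_idx y m); rewrite // expr0n.
Qed.

Lemma tailv_sqr_sum_min m (A : {set 'I_n}) :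
  (#|A| <= m)%N ->
  \sum_i tailv y m ord0 i ^+ 2 <= \sum_(i | i \notin A) y ord0 i ^+ 2.
Proof.
move=> Am; rewrite tailv_sqr_sum.
rewrite (eq_bigl (fun i => i \notin [set j | j \in top_idx y m])) => [|i]; last first.
  by rewrite inE.
apply: ler_sum_notin => [|i|a b]; rewrite ?sqr_ge0 //.
  rewrite cardsE card_top_idx leq_min Am /=.
  by have := max_card (mem A); rewrite card_ord.
by rewrite !inE => /andP [a_top _] /andP [_ b_top]; apply: sqr_le_top_idx b_top a_top.
Qed.

Lemma sub_top_idx m l : {subset top_idx y m <= top_idx y (m + l)}.
Proof. by move=> i; rewrite !top_idxE takeD mem_cat => ->. Qed.

Lemma sqr_notin_top_idx_le m l i :
  i \notin top_idx y (m + l) ->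
  l%:R * y ord0 i ^+ 2 <= \sum_(j | j \notin top_idx y m) y ord0 j ^+ 2.
Proof.
move=> i_top; have mln : (m + l < n)%N.
  by rewrite ltnNge; apply: contra i_top => /top_idx_full ->; apply: mem_abs_sorted.
set D := take l (drop m abs_sorted).
have top_mlE : top_idx y (m + l) = top_idx y m ++ D by rewrite !top_idxE takeD.
have := take_uniq (m + l) abs_sorted_uniq.
rewrite -top_idxE top_mlE cat_uniq => /and3P [_ /hasPn D_top D_uniq].
have cardD : #|D| = l.
  move/card_uniqP: D_uniq => ->; rewrite size_take_min size_drop size_abs_sorted.
  by apply/minn_idPl; rewrite leq_subRL // ltnW // (leq_trans _ mln) ?leq_addr.
rewrite mulr_natl -cardD -sumr_const.
apply: (@le_trans _ _ (\sum_(j in D) y ord0 j ^+ 2)).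
  by apply: ler_sum => j jD; apply: sqr_le_top_idx i_top; rewrite top_mlE mem_cat jD orbT.
by apply: ler_sum_subpred => [j|j /D_top]; rewrite ?sqr_ge0.
Qed.

End TopCoordinates.

Lemma tailv_subsample_sqr_le (R : realType) n (x : 'rV[R]_n) (S H : {set 'I_n}) m :
  (#|S :&: H| <= m)%N ->
  \sum_i tailv (subsample x S) m ord0 i ^+ 2 <= \sum_(i in S :\: H) x ord0 i ^+ 2.
Proof.
move/tailv_sqr_sum_min/le_trans; apply; rewrite le_eqVlt; apply/orP; left.
rewrite big_mkcond [X in _ == X]big_mkcond; apply/eqP/eq_bigr => i _.
by rewrite !inE mxE; case: (i \in S); case: (i \in H); rewrite //= expr0n.
Qed.

Lemma l2norm_le_sqrtM (R : realType) n (u v : 'rV[R]_n) (a : R) :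
  0 <= a -> \sum_i u ord0 i ^+ 2 <= a * \sum_i v ord0 i ^+ 2 ->
  l2norm u <= Num.sqrt a * l2norm v.
Proof.
move=> a_ge0 uv; rewrite /l2norm -sqrtrM // ler_sqrt //.
by rewrite mulr_ge0 // sumr_ge0 // => i _; apply: sqr_ge0.
Qed.

Section SubsampledTail.
Variables (R : realType) (n : nat) (x : 'rV[R]_n) (k : nat) (p : R).
Hypotheses (k_ge4 : (4 <= k)%N) (p_gt0 : 0 < p) (p_le1 : p <= 1).

Let T := Num.truncn (k%:R / p).
Let M := Num.truncn (k%:R / (4 * p)).
Let H := [set i | i \in top_idx x (T + M)].
Let N := \sum_(i | i \notin top_idx x T) x ord0 i ^+ 2.

Let p_ge0 : 0 <= p. Proof. exact: ltW. Qed.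

Let T_le : T%:R * p <= k%:R.
Proof. by rewrite -ler_pdivlMr // truncn_le divr_ge0. Qed.

Let M_ge1 : (1 <= M)%N.
Proof.
rewrite truncn_gt0 ler_pdivlMr ?mulr_gt0 // mul1r.
have := p_le1; have : 4 <= k%:R :> R by rewrite ler_nat.
lra.
Qed.

Let M_bounds : 4 * p * M%:R <= k%:R <= 8 * p * M%:R.
Proof.
have M_le : M%:R <= k%:R / (4 * p) by rewrite truncn_le divr_ge0 ?mulr_ge0.
have lt_M : k%:R / (4 * p) < M.+1%:R := truncnS_gt _.
rewrite ler_pdivlMr ?mulr_gt0 // mulrC in M_le.
rewrite ltr_pdivrMr ?mulr_gt0 // -natr1 in lt_M.
have : 1 <= M%:R :> R by rewrite ler1n M_ge1.
by rewrite M_le /=; have := p_ge0; nra.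
Qed.

Lemma l2norm_tailv_subsample_le (S : {set 'I_n}) :
  (#|S :&: H| <= 2 * k)%N -> \sum_(i in S :\: H) x ord0 i ^+ 2 <= 2 * p * N ->
  l2norm (tailv (subsample x S) (2 * k)) <= Num.sqrt (2 * p) * l2norm (tailv x T).
Proof.
move=> SH light; apply: l2norm_le_sqrtM; first by rewrite mulr_ge0.
by apply: le_trans (tailv_subsample_sqr_le x SH) _; rewrite tailv_sqr_sum.
Qed.

Lemma subsample_prob_heavy :
  subsample_prob p (fun S => (2 * k)%:R < #|S :&: H|%:R :> R)
  <= expR (- (k%:R / 48)).
Proof.
pose w i : R := if i \in H then 1 else 0.
have sum_w (A : {set 'I_n}) : \sum_(i in A) w i = #|A :&: H|%:R.
  rewrite /w -big_mkcondr /= sumr_const; congr (_ *+ _).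
  by apply: eq_card => i; rewrite [RHS]inE.
apply: le_trans (subsample_chernoff p_ge0 p_le1 (w := w) (t := (2 * k)%:R) ltr01 _ _) _.
- by move=> i; rewrite /w; case: (i \in H); rewrite lexx ler01.
- by move=> S; rewrite sum_w.
rewrite ler_expR divr1.
have : #|H|%:R <= T%:R + M%:R :> R.
  by rewrite -natrD ler_nat cardsE card_top_idx geq_minl.
move=> /(ler_wpM2l p_ge0); rewrite /w -big_mkcond sumr_const.
have := T_le; have := M_bounds; rewrite natrM; lra.
Qed.

Lemma subsample_prob_light :
  subsample_prob p (fun S => 2 * p * N < \sum_(i in S :\: H) x ord0 i ^+ 2)
  <= expR (- (k%:R / 48)).
Proof.
pose w i := if i \in H then 0 else x ord0 i ^+ 2.
have N_ge0 : 0 <= N by apply: sumr_ge0 => i _; apply: sqr_ge0.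
have w_ge0 i : 0 <= w i by rewrite /w; case: ifP; rewrite ?sqr_ge0.
have sum_w (A : {set 'I_n}) : \sum_(i in A) w i = \sum_(i in A :\: H) x ord0 i ^+ 2.
  rewrite big_mkcond [RHS]big_mkcond; apply: eq_bigr => i _.
  by rewrite /w !inE; case: (i \in A); case: (i \in top_idx x (T + M)).
have w_le i : M%:R * w i <= N.
  rewrite /w; case: ifP => [_|/negbT]; first by rewrite mulr0.
  by rewrite inE; apply: sqr_notin_top_idx_le.
have sum_w_le : \sum_i w i <= N.
  rewrite (bigID (mem H)) /= big1 ?add0r => [|i iH]; last by rewrite /w iH.
  rewrite (eq_bigr (fun i => x ord0 i ^+ 2)) => [|i /negbTE iH]; last by rewrite /w iH.
  apply: ler_sum_subpred => [i|i]; first exact: sqr_ge0.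
  by rewrite inE; apply: contra; apply: sub_top_idx.
have M_gt0 : 0 < M%:R :> R by rewrite ltr0n.
have [N0|N_neq0] := eqVneq N 0.
  rewrite subsample_prob_eq0 ?expR_ge0 // => S; rewrite -sum_w N0 mulr0 -leNgt.
  apply: sumr_le0 => i _; rewrite -(pmulr_rle0 _ M_gt0) -N0; exact: w_le.
have B_gt0 : 0 < N / M%:R by rewrite divr_gt0 // lt0r N_neq0.
apply: le_trans (subsample_chernoff p_ge0 p_le1 (w := w) (t := 2 * p * N) B_gt0 _ _) _.
- by move=> i; rewrite w_ge0 ler_pdivlMr // mulrC w_le.
- by move=> S; rewrite sum_w.
set B := N / M%:R in B_gt0 *.
have NE : N = B * M%:R by rewrite /B divfK // lt0r_neq0.
rewrite ler_expR ler_pdivrMr // NE; rewrite NE in sum_w_le.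
have := ler_wpM2l p_ge0 sum_w_le.
have := ler_wpM2l (ltW B_gt0) (proj2 (andP M_bounds)).
lra.
Qed.

Lemma subsample_prob_tail_fail :
  subsample_prob p (fun S => ~~ (l2norm (tailv (subsample x S) (2 * k))
                                 <= Num.sqrt (2 * p) * l2norm (tailv x T)))
  <= 2 * expR (- (k%:R / 48)).
Proof.
apply: le_trans (subsample_probU p_ge0 p_le1 _) _; last first.
  rewrite mulr_natl mulr2n.
  by apply: lerD; [apply: subsample_prob_heavy | apply: subsample_prob_light].
move=> S fail; rewrite /= !ltNge -negb_and; apply: contra fail => /andP [SH light].
by apply: l2norm_tailv_subsample_le => //; rewrite -(ler_nat R).
Qed.

End SubsampledTail.

Theorem lemma1 (R : realType) :
  exists (c C : R), 0 < c /\ 0 < C /\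
  forall (n : nat) (x : 'rV[R]_n) (k : nat) (p : R),
    (1 <= k)%N -> 0 < p -> p <= 1 ->
    subsample_prob p
      (fun S : {set 'I_n} =>
         ~~ (l2norm (tailv (subsample x S) (2 * k)%N)
             <= Num.sqrt (2 * p) * l2norm (tailv x (Num.truncn (k%:R / p)))))
    <= C * expR (- (c * k%:R)).
Proof.
exists 48^-1, 2; split; first by rewrite invr_gt0.
split=> // n x k p k_ge1 p_gt0 p_le1.
rewrite [48^-1 * _]mulrC.
have [k_lt4|k_ge4] := ltnP k 4; last exact: subsample_prob_tail_fail.
apply: le_trans (subsample_prob_le1 (ltW p_gt0) p_le1 _) _.
have k_le3 : k%:R <= 3 :> R by rewrite ler_nat -ltnS.
have k48_ge0 : 0 <= k%:R / 48 :> R by rewrite divr_ge0.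
have k48_le : k%:R / 48 <= 1 / 4 :> R by lra.
have := expR_le1D_small k48_ge0 k48_le.
rewrite expRN ler_pdivlMr ?expR_gt0 // mul1r; lra.
Qed.
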